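(* Consider, for a constant $A=\lambda\neq0$ and smooth functions $B,C$, the equation $$u_t=\big[\lambda u_{xx}+B(u)u_x+C(u)\big]_x\tag{E}$$ and the system $$v_t=\lambda u_{xx}+B(u)u_x+C(u),\qquad v_x=u,\qquad v_{xx}=u_x.\tag{S'}$$ The system of determining equations for Lie symmetries $X=\xi^0\partial_t+\xi^1\partial_x+\eta\partial_u$ of (E) (with $\xi^0=\xi^0(t)$, $\xi^1=\xi^1(t,x)$, $\eta=\alpha(t,x)u+\beta(t,x)$) $$\begin{aligned} &(\alpha_x+\xi^1_{xx})A'=0,\quad (\alpha u+\beta)A'=(3\xi^1_x-\xi^0_t)A,\quad (\alpha u+\beta)B'=(2\xi^1_x-\xi^0_t)B-3\alpha_x A,\\ &(\alpha_x+\xi^1_{xx})C'=(\alpha_{xx}+\xi^1_{xxx})B-(\alpha_{xxx}+\xi^1_{xxxx})A+\alpha_t+\xi^1_{xt},\\ &(\alpha_x u+\beta_x)C'=-(\alpha_{xx}u+\beta_{xx})B-(\alpha_{xxx}u+\beta_{xxx})A+\alpha_t u+\beta_t, \end{aligned}$$ is NOT equivalent to the system of determining equations for Lie symmetries $X=\xi^0\partial_t+\xi^1\partial_x+\eta^1\partial_u+\eta^2\partial_v$ of (S') (with $\xi^0=\xi^0(t)$, $\xi^1=\xi^1(t,x)$, $\eta^1=\alpha(t,x,v)u+\beta(t,x,v)$, $\eta^2=\eta^2(t,x,v)$) $$\begin{aligned} &(\alpha u+\beta)A'=(3\xi^1_x-\xi^0_t)A,\quad (\alpha u+\beta)B'=(2\xi^1_x-\xi^0_t)B-3(\alpha_v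 u+\alpha_x)A,\\ &(\alpha u+\beta)C'=(\alpha+\xi^1_x-\xi^0_t)C-\big[\alpha_v u^2+(2\alpha_x+\xi^1_{xx})u+\beta_x\big]B\\ &\qquad-\big[\alpha_{vv}u^3+3\alpha_{vx}u^2+(3\alpha_{xx}+2\xi^1_{xxx})u+\beta_{xx}\big]A-\xi^1_t u+\eta^2_t,\\ &\eta^2_v=\alpha+\xi^1_x,\qquad \eta^2_x=\beta. \end{aligned}$$ Moreover, for suitably specified functions $B$ and $C$, the latter system produces pure potential symmetries of (E), i.e. Lie symmetries of (S') in which at least one of $\xi^0,\xi^1,\eta^1$ depends genuinely on $v$.
   Context: Here $A'$, $B'$, $C'$ denote derivatives with respect to $u$ (so $A'=0$ when $A=\lambda$) and subscripts denote partial derivatives. The determining equations are those produced by the classical Lie algorithm for infinitesimal invariance; system (S') is the potential system $v_t=\lambda u_{xx}+Bu_x+C$, $v_x=u$ (introduced via $u=v_x$) supplemented by the differential consequence $v_{xx}=u_x$. A Lie symmetry of (S') is a pure potential symmetry of (E) if one of the coefficients of $\partial_t,\partial_x,\partial_u$ depends on $v$. Standing assumption: (E) is nonlinear. *)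

From Stdlib Require Import Reals List.
From Coquelicot Require Import Coquelicot.
Open Scope R_scope.

Inductive dir3 := D3_t | D3_x | D3_v.
Definition pd3 (d : dir3) (f : R -> R -> R -> R) : R -> R -> R -> R :=
  match d with
  | D3_t => fun t x v => Derive (fun s => f s x v) t
  | D3_x => fun t x v => Derive (fun s => f t s v) x
  | D3_v => fun t x v => Derive (fun s => f t x s) v
  end.
Definition ex_pd3 (d : dir3) (f : R -> R -> R -> R) (t x v : R) : Prop :=
  match d with
  | D3_t => ex_derive (fun s => f s x v) t
  | D3_x => ex_derive (fun s => f t s v) x
  | D3_v => ex_derive (fun s => f t x s) v
  end.
Fixpoint iter_pd3 (w : list dir3) (f : R -> R -> R -> R) : R -> R -> R -> R :=
  match w with nil => f | d :: w' => pd3 d (iter_pd3 w' f) end.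
Definition dt3 := pd3 D3_t.
Definition dx3 := pd3 D3_x.
Definition dv3 := pd3 D3_v.

Inductive dir2 := D2_t | D2_x.
Definition pd2 (d : dir2) (f : R -> R -> R) : R -> R -> R :=
  match d with
  | D2_t => fun t x => Derive (fun s => f s x) t
  | D2_x => fun t x => Derive (fun s => f t s) x
  end.
Definition ex_pd2 (d : dir2) (f : R -> R -> R) (t x : R) : Prop :=
  match d with
  | D2_t => ex_derive (fun s => f s x) t
  | D2_x => ex_derive (fun s => f t s) x
  end.
Fixpoint iter_pd2 (w : list dir2) (f : R -> R -> R) : R -> R -> R :=
  match w with nil => f | d :: w' => pd2 d (iter_pd2 w' f) end.
Definition dt2 := pd2 D2_t.
Definition dx2 := pd2 D2_x.

Definition Smooth1 (f : R -> R) : Prop :=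
  forall (n : nat) (x : R), ex_derive (Derive_n f n) x.

Definition Smooth2 (f : R -> R -> R) : Prop :=
  forall w : list dir2,
    (forall t x : R,
       continuous (fun p : R * R => iter_pd2 w f (fst p) (snd p)) (t, x)) /\
    (forall d t x, ex_pd2 d (iter_pd2 w f) t x).

Definition Smooth3 (f : R -> R -> R -> R) : Prop :=
  forall w : list dir3,
    (forall t x v : R,
       continuous (fun p : R * R * R =>
                     iter_pd3 w f (fst (fst p)) (snd (fst p)) (snd p)) (t, x, v)) /\
    (forall d t x v, ex_pd3 d (iter_pd3 w f) t x v).

(* (E): u_t = [lam u_xx + B(u) u_x + C(u)]_x
        = lam u_xxx + B'(u) u_x^2 + B(u) u_xx + C'(u) u_x,
   the right-hand side as a function of the jet (u, u_x, u_xx, u_xxx). *)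
Definition rhsE (lam : R) (B C : R -> R) (u u1 u2 u3 : R) : R :=
  lam * u3 + Derive B u * u1 ^ 2 + B u * u2 + Derive C u * u1.

Definition LinearE (lam : R) (B C : R -> R) : Prop :=
  forall (u u1 u2 u3 w w1 w2 w3 c : R),
    rhsE lam B C (u + w) (u1 + w1) (u2 + w2) (u3 + w3)
      = rhsE lam B C u u1 u2 u3 + rhsE lam B C w w1 w2 w3 /\
    rhsE lam B C (c * u) (c * u1) (c * u2) (c * u3) = c * rhsE lam B C u u1 u2 u3.

Definition NonlinearE (lam : R) (B C : R -> R) : Prop := ~ LinearE lam B C.

(* X = xi0(t) d_t + xi1(t,x) d_x + (a(t,x) u + b(t,x)) d_u *)
Definition DetE (lam : R) (B C : R -> R) (xi0 : R -> R) (xi1 a b : R -> R -> R) : Prop :=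
  forall t x u : R,
    let A := lam in let A' := 0 in
    let B' := Derive B u in let C' := Derive C u in
    let xi0_t := Derive xi0 t in
    let xi1_x := dx2 xi1 t x in
    let xi1_xx := dx2 (dx2 xi1) t x in
    let xi1_xxx := dx2 (dx2 (dx2 xi1)) t x in
    let xi1_xxxx := dx2 (dx2 (dx2 (dx2 xi1))) t x in
    let xi1_xt := dt2 (dx2 xi1) t x in
    let a_t := dt2 a t x in
    let a_x := dx2 a t x in
    let a_xx := dx2 (dx2 a) t x in
    let a_xxx := dx2 (dx2 (dx2 a)) t x in
    let b_t := dt2 b t x in
    let b_x := dx2 b t x in
    let b_xx := dx2 (dx2 b) t x in
    let b_xxx := dx2 (dx2 (dx2 b)) t x in
    (a_x + xi1_xx) * A' = 0 /\
    (a t x * u + b t x) * A' = (3 * xi1_x - xi0_t) * A /\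
    (a t x * u + b t x) * B' = (2 * xi1_x - xi0_t) * B u - 3 * a_x * A /\
    (a_x + xi1_xx) * C' =
      (a_xx + xi1_xxx) * B u - (a_xxx + xi1_xxxx) * A + a_t + xi1_xt /\
    (a_x * u + b_x) * C' =
      - (a_xx * u + b_xx) * B u - (a_xxx * u + b_xxx) * A + a_t * u + b_t.

(* X = xi0(t) d_t + xi1(t,x) d_x + (a(t,x,v) u + b(t,x,v)) d_u + eta2(t,x,v) d_v *)
Definition DetS (lam : R) (B C : R -> R) (xi0 : R -> R) (xi1 : R -> R -> R)
    (a b eta2 : R -> R -> R -> R) : Prop :=
  forall t x v u : R,
    let A := lam in let A' := 0 in
    let B' := Derive B u in let C' := Derive C u in
    let xi0_t := Derive xi0 t in
    let xi1_t := dt2 xi1 t x in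
    let xi1_x := dx2 xi1 t x in
    let xi1_xx := dx2 (dx2 xi1) t x in
    let xi1_xxx := dx2 (dx2 (dx2 xi1)) t x in
    let a_x := dx3 a t x v in
    let a_v := dv3 a t x v in
    let a_xx := dx3 (dx3 a) t x v in
    let a_vv := dv3 (dv3 a) t x v in
    let a_vx := dv3 (dx3 a) t x v in
    let b_x := dx3 b t x v in
    let b_xx := dx3 (dx3 b) t x v in
    let eta2_t := dt3 eta2 t x v in
    let eta2_x := dx3 eta2 t x v in
    let eta2_v := dv3 eta2 t x v in
    let al := a t x v in let be := b t x v in
    (al * u + be) * A' = (3 * xi1_x - xi0_t) * A /\
    (al * u + be) * B' = (2 * xi1_x - xi0_t) * B u - 3 * (a_v * u + a_x) * A /\
    (al * u + be) * C' =
      (al + xi1_x - xi0_t) * C u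
      - (a_v * u ^ 2 + (2 * a_x + xi1_xx) * u + b_x) * B u
      - (a_vv * u ^ 3 + 3 * a_vx * u ^ 2 + (3 * a_xx + 2 * xi1_xxx) * u + b_xx) * A
      - xi1_t * u + eta2_t /\
    eta2_v = al + xi1_x /\
    eta2_x = be.

Definition DetSystemsEquivalent (lam : R) (B C : R -> R) : Prop :=
  (forall (xi0 : R -> R) (xi1 : R -> R -> R) (a b eta2 : R -> R -> R -> R),
     Smooth1 xi0 -> Smooth2 xi1 -> Smooth3 a -> Smooth3 b -> Smooth3 eta2 ->
     DetS lam B C xi0 xi1 a b eta2 ->
     (forall t x v v', a t x v = a t x v' /\ b t x v = b t x v') /\
     DetE lam B C xi0 xi1 (fun t x => a t x 0) (fun t x => b t x 0)) /\
  (forall (xi0 : R -> R) (xi1 a b : R -> R -> R),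
     Smooth1 xi0 -> Smooth2 xi1 -> Smooth2 a -> Smooth2 b ->
     DetE lam B C xi0 xi1 a b ->
     exists eta2 : R -> R -> R -> R, Smooth3 eta2 /\
       DetS lam B C xi0 xi1 (fun t x _ => a t x) (fun t x _ => b t x) eta2).

(* xi0 = xi0(t), xi1 = xi1(t,x) cannot depend on v by typing; the coefficient
   eta1 = a(t,x,v) u + b(t,x,v) of d_u must genuinely depend on v. *)
Definition PurePotential (a b : R -> R -> R -> R) : Prop :=
  exists t x u v v' : R, a t x v * u + b t x v <> a t x v' * u + b t x v'.

(* With B(u) = u and C(u) = u^3/(9 lam), the field with xi0 = xi1 = 0,
   eta1 = e^(k v) u and eta2 = e^(k v)/k, where k = -1/(3 lam), solves the
   determining equations of (S'): eta2_v = alpha and eta2_x = beta = 0 hold by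
   construction, the B'-equation reduces to 3 k lam = -1 and the C'-equation to
   2/(9 lam) = -k - lam k^2.  Since alpha depends on v, this symmetry is a pure
   potential symmetry of (E), and it cannot be restricted to a solution of the
   determining equations of (E), so the two systems are not equivalent. *)

From Stdlib Require Import Reals Lra FunctionalExtensionality.
From Coquelicot Require Import Coquelicot.
Open Scope R_scope.

Lemma Smooth1_ext (f g : R -> R) :
  (forall u, f u = g u) -> Smooth1 f -> Smooth1 g.
Proof. intros Hfg Hf n x. exact (ex_derive_n_ext f g (S n) x Hfg (Hf n x)). Qed.

Lemma Smooth1_scal_pow (c : R) (p : nat) : Smooth1 (fun u => c * u ^ p).
Proof. intros n x. exact (ex_derive_n_scal_l _ (S n) c x (ex_derive_n_pow (S n) p x)). Qed.

Lemma Smooth1_const (c : R) : Smooth1 (fun _ => c).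
Proof. intros n x. exact (ex_derive_n_const c (S n) x). Qed.

Lemma Smooth1_id : Smooth1 (fun u => u).
Proof. apply (Smooth1_ext (fun u => 1 * u ^ 1)); [intro u; ring | apply Smooth1_scal_pow]. Qed.

Lemma pd2_const (d : dir2) (c : R) : pd2 d (fun _ _ => c) = fun _ _ => 0.
Proof.
  do 2 (apply functional_extensionality; intro).
  destruct d; simpl; apply Derive_const.
Qed.

Lemma iter_pd2_const (c : R) (w : list dir2) :
  exists c', iter_pd2 w (fun _ _ => c) = fun _ _ => c'.
Proof.
  induction w as [|d w [c' IH]]; simpl; [now exists c|].
  exists 0. rewrite IH. apply pd2_const.
Qed.

Lemma Smooth2_const (c : R) : Smooth2 (fun _ _ => c).
Proof.
  intro w. destruct (iter_pd2_const c w) as [c' ->]. split.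
  - intros; apply continuous_const.
  - intros [] t x; simpl; apply ex_derive_const.
Qed.

Definition expv (c k : R) : R -> R -> R -> R := fun _ _ v => c * exp (k * v).

Lemma dt3_expv (c k : R) : dt3 (expv c k) = expv 0 k.
Proof.
  do 3 (apply functional_extensionality; intro).
  unfold dt3, expv; simpl. rewrite Derive_const. ring.
Qed.

Lemma dx3_expv (c k : R) : dx3 (expv c k) = expv 0 k.
Proof.
  do 3 (apply functional_extensionality; intro).
  unfold dx3, expv; simpl. rewrite Derive_const. ring.
Qed.

Lemma dv3_expv (c k : R) : dv3 (expv c k) = expv (c * k) k.
Proof.
  do 3 (apply functional_extensionality; intro).
  unfold dv3, expv; simpl. apply is_derive_unique. auto_derive; auto. ring.
Qed.

Lemma iter_pd3_expv (c k : R) (w : list dir3) :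
  exists c', iter_pd3 w (expv c k) = expv c' k.
Proof.
  induction w as [|d w [c' IH]]; simpl; [now exists c|].
  rewrite IH. destruct d;
    [exists 0; apply dt3_expv | exists 0; apply dx3_expv | eexists; apply dv3_expv].
Qed.

Lemma Smooth3_expv (c k : R) : Smooth3 (expv c k).
Proof.
  intro w. destruct (iter_pd3_expv c k w) as [c' ->]. split.
  - intros t x v.
    apply (continuous_comp (fun p : R * R * R => snd p) (fun y => c' * exp (k * y))).
    + apply continuous_snd.
    + apply (@ex_derive_continuous R_AbsRing R_NormedModule). auto_derive. auto.
  - intros [] t x v; unfold expv; simpl; auto_derive; auto.
Qed.

(* On the jets (0, c, 0, 0) the right-hand side of (E) is B'(0) c^2 + C'(0) c. *)
Lemma NonlinearE_of_Derive_B0 (lam : R) (B C : R -> R) :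
  Derive B 0 <> 0 -> NonlinearE lam B C.
Proof.
  intros HB Hlin. destruct (Hlin 0 1 0 0 0 0 0 0 2) as [_ Hscal].
  unfold rhsE in Hscal. rewrite !Rmult_0_r in Hscal. apply HB. nra.
Qed.

Lemma not_DetSystemsEquivalent_of_pure_potential (lam : R) (B C xi0 : R -> R)
    (xi1 : R -> R -> R) (a b eta2 : R -> R -> R -> R) :
  Smooth1 xi0 -> Smooth2 xi1 -> Smooth3 a -> Smooth3 b -> Smooth3 eta2 ->
  DetS lam B C xi0 xi1 a b eta2 -> PurePotential a b ->
  ~ DetSystemsEquivalent lam B C.
Proof.
  intros Hxi0 Hxi1 Ha Hb Heta2 HS (t & x & u & v & v' & Hne) [Hrestrict _].
  destruct (Hrestrict xi0 xi1 a b eta2 Hxi0 Hxi1 Ha Hb Heta2 HS) as [Hindep _].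
  destruct (Hindep t x v v') as [Ha_v Hb_v].
  apply Hne. now rewrite Ha_v, Hb_v.
Qed.

Section PotentialSymmetry.

Variable lam : R.
Hypothesis lam_neq0 : lam <> 0.

Definition pot_B : R -> R := fun u => u.
Definition pot_C : R -> R := fun u => / (9 * lam) * u ^ 3.
Definition pot_rate : R := - / (3 * lam).

Lemma pot_rate_neq0 : pot_rate <> 0.
Proof. unfold pot_rate. apply Ropp_neq_0_compat, Rinv_neq_0_compat. lra. Qed.

Lemma Derive_pot_B (u : R) : Derive pot_B u = 1.
Proof. apply is_derive_unique. unfold pot_B. auto_derive; auto. Qed.

Lemma Derive_pot_C (u : R) : Derive pot_C u = 3 / (9 * lam) * u ^ 2.
Proof. apply is_derive_unique. unfold pot_C. auto_derive; auto. field. lra. Qed.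

Lemma NonlinearE_pot : NonlinearE lam pot_B pot_C.
Proof. apply NonlinearE_of_Derive_B0. rewrite Derive_pot_B. lra. Qed.

Lemma DetS_pot :
  DetS lam pot_B pot_C (fun _ => 0) (fun _ _ => 0)
    (expv 1 pot_rate) (expv 0 pot_rate) (expv (/ pot_rate) pot_rate).
Proof.
  assert (Hk := pot_rate_neq0).
  intros t x v u. cbv zeta. unfold dx2, dt2.
  rewrite !dt3_expv, !dx3_expv, !dv3_expv, !pd2_const,
    Derive_pot_B, Derive_pot_C, Derive_const.
  unfold expv, pot_B, pot_C. unfold pot_rate in *.
  repeat split; field; lra.
Qed.

Lemma PurePotential_pot : PurePotential (expv 1 pot_rate) (expv 0 pot_rate).
Proof.
  exists 0, 0, 1, 0, 1. unfold expv. intro Heq. apply pot_rate_neq0.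
  assert (Hexp : exp (pot_rate * 0) = exp (pot_rate * 1)) by lra.
  apply exp_inv in Hexp. lra.
Qed.

End PotentialSymmetry.

Theorem theorem3 :
  forall lam : R, lam <> 0 ->
    (exists B C : R -> R,
        Smooth1 B /\ Smooth1 C /\ NonlinearE lam B C /\
        ~ DetSystemsEquivalent lam B C) /\
    (exists B C : R -> R,
        Smooth1 B /\ Smooth1 C /\ NonlinearE lam B C /\
        exists (xi0 : R -> R) (xi1 : R -> R -> R) (a b eta2 : R -> R -> R -> R),
          Smooth1 xi0 /\ Smooth2 xi1 /\ Smooth3 a /\ Smooth3 b /\ Smooth3 eta2 /\
          DetS lam B C xi0 xi1 a b eta2 /\ PurePotential a b).
Proof.
  intros lam Hlam.
  pose proof (DetS_pot lam Hlam) as HS.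
  pose proof (PurePotential_pot lam Hlam) as HP.
  pose proof (Smooth1_const 0) as Hxi0.
  pose proof (Smooth2_const 0) as Hxi1.
  split; exists pot_B, (pot_C lam);
    refine (conj Smooth1_id (conj (Smooth1_scal_pow _ _) (conj (NonlinearE_pot lam) _))).
  - exact (not_DetSystemsEquivalent_of_pure_potential _ _ _ _ _ _ _ _
      Hxi0 Hxi1 (Smooth3_expv _ _) (Smooth3_expv _ _) (Smooth3_expv _ _) HS HP).
  - exists (fun _ => 0), (fun _ _ => 0), (expv 1 (pot_rate lam)), (expv 0 (pot_rate lam)),
      (expv (/ pot_rate lam) (pot_rate lam)).
    exact (conj Hxi0 (conj Hxi1 (conj (Smooth3_expv _ _) (conj (Smooth3_expv _ _)
      (conj (Smooth3_expv _ _) (conj HS HP)))))).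
Qed.
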